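(* Let $n,p,q\in\mathbb{N}_{>0}$ with $p>q$, let $\mathcal W:\mathbb{R}^q\to\mathbb{R}^p$ be a mapping, let $\eta\in\mathbb{R}^q$ be a constant vector, and let $(y(k))_{k\in\mathbb{N}_{\ge0}}\subset\mathbb{R}^n$, $(\Omega(k))_{k\in\mathbb{N}_{\ge0}}\subset\mathbb{R}^{n\times p}$ be sequences satisfying $y(k)=\Omega(k)\mathcal W(\eta)$ for all $k\ge0$. Let $T\in\mathbb{R}^{p\times p}$ be a permutation matrix, $C:=\begin{bmatrix} I_q & | & 0_{q\times(p-q)}\end{bmatrix}T$ and $\mathcal G(\eta):=C\mathcal W(\eta)$. Fix $0<\alpha<1$ and define, for $k\ge1$, $$Y(k)=-\alpha Y(k-1)+\Omega^\top(k-1)y(k-1),\qquad \Phi(k)=-\alpha\Phi(k-1)+\Omega^\top(k-1)\Omega(k-1),$$ with $Y(0)=0\in\mathbb{R}^p$, $\Phi(0)=0\in\mathbb{R}^{p\times p}$, and set $\mathcal Y(k):=C\,\mathrm{adj}\{\Phi(k)\}Y(k)$, $\Delta(k):=\det\{\Phi(k)\}$. Then $$\mathcal Y_i(k)=\Delta(k)\mathcal G_i(\eta),\quad i=1,\dots,q,$$ i.e. $\mathcal Y(k)=\Delta(k)\mathcal G(\eta)$, for all $k\ge0$.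
   Context: $\mathrm{adj}\{A\}$ denotes the adjugate matrix of a square matrix $A$, satisfying $\mathrm{adj}\{A\}A=\det\{A\}I$. *)

From mathcomp Require Import all_boot all_order all_fingroup all_algebra.
Set Implicit Arguments. Unset Strict Implicit. Unset Printing Implicit Defensive.
Import Order.TTheory GRing.Theory Num.Theory.
Local Open Scope ring_scope.

Definition sel_mx (R : nzRingType) (q p : nat) : 'M[R]_(q, p) :=
  \matrix_(i < q, j < p) ((nat_of_ord i == nat_of_ord j)%:R).

Fixpoint Yfilt (R : nzRingType) (n p : nat) (alpha : R)
  (Omega : nat -> 'M[R]_(n, p)) (y : nat -> 'cV[R]_n) (k : nat) : 'cV[R]_p :=
  match k with
  | 0 => 0
  | k'.+1 => - alpha *: Yfilt alpha Omega y k' + (Omega k')^T *m y k'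
  end.

Fixpoint Phifilt (R : nzRingType) (n p : nat) (alpha : R)
  (Omega : nat -> 'M[R]_(n, p)) (k : nat) : 'M[R]_p :=
  match k with
  | 0 => 0
  | k'.+1 => - alpha *: Phifilt alpha Omega k' + (Omega k')^T *m Omega k'
  end.

From mathcomp Require Import all_boot all_order all_fingroup all_algebra.
Import Order.TTheory GRing.Theory Num.Theory.
Set Implicit Arguments. Unset Strict Implicit.
Local Open Scope ring_scope.

(* Since y(k) = Omega(k) w with w = W(eta), the filter Y obeys the same linear
   recursion as Phi w, so Y(k) = Phi(k) w for every k.  Cramer's rule
   adj(Phi) Phi = det(Phi) I then gives adj(Phi(k)) Y(k) = det(Phi(k)) w, and
   multiplying by any matrix C on the left yields the claim. *)

Section RegressorFilters.

Variables n p : nat.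

Lemma Yfilt_Phifilt (R : nzRingType) (alpha : R)
    (Omega : nat -> 'M[R]_(n, p)) (y : nat -> 'cV[R]_n) (w : 'cV[R]_p) :
  (forall k, y k = Omega k *m w) ->
  forall k, Yfilt alpha Omega y k = Phifilt alpha Omega k *m w.
Proof.
move=> hy; elim=> [|k IHk] /=; first by rewrite mul0mx.
by rewrite IHk hy mulmxDl -scalemxAl mulmxA.
Qed.

Lemma adj_Phifilt_Yfilt (R : comNzRingType) (alpha : R)
    (Omega : nat -> 'M[R]_(n, p)) (y : nat -> 'cV[R]_n) (w : 'cV[R]_p) :
  (forall k, y k = Omega k *m w) ->
  forall k, \adj (Phifilt alpha Omega k) *m Yfilt alpha Omega y k
            = \det (Phifilt alpha Omega k) *: w.
Proof.
by move=> hy k; rewrite (Yfilt_Phifilt alpha hy) mulmxA mul_adj_mx mul_scalar_mx.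
Qed.

End RegressorFilters.

Theorem proposition2 (R : realFieldType) (n p q : nat)
  (hn : (0 < n)%N) (hq : (0 < q)%N) (hpq : (q < p)%N)
  (W : 'cV[R]_q -> 'cV[R]_p) (eta : 'cV[R]_q)
  (y : nat -> 'cV[R]_n) (Omega : nat -> 'M[R]_(n, p))
  (hy : forall k, y k = Omega k *m W eta)
  (s : 'S_p) (alpha : R) (ha0 : 0 < alpha) (ha1 : alpha < 1) :
  let T : 'M[R]_p := perm_mx s in
  let C : 'M[R]_(q, p) := sel_mx R q p *m T in
  let G : 'cV[R]_q := C *m W eta in
  forall k : nat,
    C *m \adj (Phifilt alpha Omega k) *m Yfilt alpha Omega y k
    = \det (Phifilt alpha Omega k) *: G.
Proof.
move=> T C G k.
by rewrite -mulmxA (adj_Phifilt_Yfilt alpha hy k) scalemxAr.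
Qed.
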